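(* Let $\mathbf{A}\in\mathbb{R}^{m\times n}$ have rows $\mathbf{a}_1^\mathsf{T},\dots,\mathbf{a}_m^\mathsf{T}$, let $\lambda>\max_l\|\mathbf{a}_l\|_\infty$, and consider $$\text{(P}_\lambda\text{)}\quad \min_{\boldsymbol{x}\in[-1,1]^n}\ \max_{l\in\{1,\dots,m\}}\mathbf{a}_l^\mathsf{T}\boldsymbol{x}-\lambda\|\boldsymbol{x}\|_1.$$ Then every local minimizer of (P$_\lambda$) belongs to $\{-1,1\}^n$. Conversely, every point of $\{-1,1\}^n$ is a local minimizer of (P$_\lambda$).
   Context: A local minimizer of (P$_\lambda$) is a point $\bar{\boldsymbol{x}}\in[-1,1]^n$ such that for some $\epsilon>0$ the objective at $\bar{\boldsymbol{x}}$ is no larger than at every $\boldsymbol{x}\in[-1,1]^n$ with $\|\boldsymbol{x}-\bar{\boldsymbol{x}}\|_2\le\epsilon$. *)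

From HB Require Import structures.
From mathcomp Require Import all_boot all_order all_algebra.
From mathcomp Require Import reals.
Set Implicit Arguments. Unset Strict Implicit. Unset Printing Implicit Defensive.
Import Order.TTheory GRing.Theory Num.Theory.
Local Open Scope ring_scope.

Section Defs.
Variable R : realType.

Definition rowdot m n (A : 'M[R]_(m, n)) (l : 'I_m) (x : 'I_n -> R) : R :=
  \sum_(j < n) A l j * x j.

(* max_{l in 1..m+1} a_l^T x  (m.+1 rows, so the max is over a nonempty set) *)
Definition maxrow m n (A : 'M[R]_(m.+1, n)) (x : 'I_n -> R) : R :=
  \big[Num.max/rowdot A ord0 x]_(l < m.+1) rowdot A l x.

Definition rownorm_inf m n (A : 'M[R]_(m, n)) (l : 'I_m) : R :=
  \big[Num.max/0]_(j < n) `|A l j|.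

Definition norm1 n (x : 'I_n -> R) : R := \sum_(j < n) `|x j|.

Definition norm2 n (x : 'I_n -> R) : R := Num.sqrt (\sum_(j < n) x j ^+ 2).

Definition in_box n (x : 'I_n -> R) : Prop := forall j, -1 <= x j <= 1.

Definition objP m n (A : 'M[R]_(m.+1, n)) (lam : R) (x : 'I_n -> R) : R :=
  maxrow A x - lam * norm1 x.

Definition local_minimizer m n (A : 'M[R]_(m.+1, n)) (lam : R) (xb : 'I_n -> R)
  : Prop :=
  in_box xb /\
  exists eps : R, 0 < eps /\
    forall x : 'I_n -> R, in_box x -> norm2 (fun j => x j - xb j) <= eps ->
      objP A lam xb <= objP A lam x.

Definition is_sign_vector n (x : 'I_n -> R) : Prop :=
  forall j, x j = -1 \/ x j = 1.
End Defs.

(** At a sign vector, moving inside the box towards zero lowers [lam * |x_k|]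
    faster than it can raise any [a_l^T x], since [|a_lk| < lam]; so the
    objective does not decrease nearby.  Conversely, a coordinate strictly
    inside [(-1, 1)] can be pushed outward by a small [t]: this adds [lam t] to
    [lam |x|_1] but less than [lam t] to every row, so the objective strictly
    drops and the point is not a local minimizer. *)
From HB Require Import structures.
From mathcomp Require Import all_boot all_order all_algebra.
From mathcomp Require Import reals lra.
Import Order.TTheory GRing.Theory Num.Theory.
Local Open Scope ring_scope.
Set Implicit Arguments.

Section Problem.
Variable R : realType.
Implicit Types (m n : nat) (lam : R).

Definition set_coord n (x : 'I_n -> R) (j : 'I_n) (v : R) : 'I_n -> R :=
  fun k => if k == j then v else x k.

Lemma set_coord_eq n (x : 'I_n -> R) j v : set_coord x j v j = v.
Proof. by rewrite /set_coord eqxx. Qed.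

Lemma set_coord_out n (x : 'I_n -> R) j v k : k != j -> set_coord x j v k = x k.
Proof. by rewrite /set_coord => /negbTE ->. Qed.

Lemma sumr_set_coord n (F : 'I_n -> R -> R) (x : 'I_n -> R) j v :
  \sum_(k < n) F k (set_coord x j v k)
  = \sum_(k < n) F k (x k) + (F j v - F j (x j)).
Proof.
rewrite (bigD1 j) //= [X in _ = X + _](bigD1 j) //= set_coord_eq.
by rewrite (eq_bigr (fun k => F k (x k))) => [|k /set_coord_out ->] //; lra.
Qed.

Lemma in_box_set_coord n (x : 'I_n -> R) j v :
  in_box x -> -1 <= v <= 1 -> in_box (set_coord x j v).
Proof. by move=> hx hv k; rewrite /set_coord; case: eqP. Qed.

Lemma norm1_set_coord n (x : 'I_n -> R) j v :
  norm1 (set_coord x j v) = norm1 x + (`|v| - `|x j|).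
Proof. exact: (sumr_set_coord (fun _ y => `|y|)). Qed.

Lemma norm2_set_coord_sub n (x : 'I_n -> R) j v :
  norm2 (fun k => set_coord x j v k - x k) = `|v - x j|.
Proof.
rewrite /norm2 (bigD1 j) //= big1 => [|k /set_coord_out ->]; last first.
  by rewrite subrr expr0n.
by rewrite addr0 set_coord_eq sqrtr_sqr.
Qed.

Lemma coord_le_norm2 n (x : 'I_n -> R) k : `|x k| <= norm2 x.
Proof.
have sq_ge0 i : 0 <= x i ^+ 2 by exact: sqr_ge0.
rewrite -sqrtr_sqr ler_sqrt; last exact: sumr_ge0.
by rewrite (bigD1 k) //= lerDl; exact: sumr_ge0.
Qed.

Lemma rowdot_set_coord m n (A : 'M[R]_(m, n)) l (x : 'I_n -> R) j v :
  rowdot A l (set_coord x j v) = rowdot A l x + A l j * (v - x j).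
Proof. by rewrite /rowdot (sumr_set_coord (fun k y => A l k * y)) mulrBr. Qed.

Lemma abs_entry_le_rownorm m n (A : 'M[R]_(m, n)) l j : `|A l j| <= rownorm_inf A l.
Proof. exact: (le_bigmax _ (fun k => `|A l k|)). Qed.

Lemma rowdot_le_maxrow m n (A : 'M[R]_(m.+1, n)) l (x : 'I_n -> R) :
  rowdot A l x <= maxrow A x.
Proof. exact: (le_bigmax _ (fun l => rowdot A l x)). Qed.

Lemma maxrow_le m n (A : 'M[R]_(m.+1, n)) (x : 'I_n -> R) c :
  (forall l, rowdot A l x <= c) -> maxrow A x <= c.
Proof. by move=> h; apply/bigmax_leP; split => [|l _]; exact: h. Qed.

Lemma maxrow_lt m n (A : 'M[R]_(m.+1, n)) (x : 'I_n -> R) c :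
  (forall l, rowdot A l x < c) -> maxrow A x < c.
Proof. by move=> h; apply/bigmax_ltP; split => [|l _]; exact: h. Qed.

Lemma objP_le_rowwise m n (A : 'M[R]_(m.+1, n)) lam (x y : 'I_n -> R) :
  (forall l, rowdot A l x - lam * norm1 x <= rowdot A l y - lam * norm1 y) ->
  objP A lam x <= objP A lam y.
Proof.
move=> h; rewrite /objP lerBlDr.
apply: maxrow_le => l; rewrite -lerBlDr; apply: le_trans (h l) _.
by rewrite lerD2r rowdot_le_maxrow.
Qed.

Lemma rowdot_sub_norm1 m n (A : 'M[R]_(m, n)) lam l (x : 'I_n -> R) :
  rowdot A l x - lam * norm1 x = \sum_(k < n) (A l k * x k - lam * `|x k|).
Proof. by rewrite /rowdot /norm1 mulr_sumr -sumrB. Qed.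

(* The per-coordinate gain factors as [(1 - s y) (lam - a s)]. *)
Lemma sign_term_le (a lam s y : R) :
  `|a| <= lam -> (s = -1 \/ s = 1) -> -1 <= y <= 1 -> `|y - s| <= 1 ->
  a * s - lam * `|s| <= a * y - lam * `|y|.
Proof.
move=> ha hs /andP[y_ge y_le]; have := ler_norm a; have := ler_norm (- a).
rewrite normrN => ha1 ha2.
case: hs => ->; rewrite ?normrN normr1 => /ler_normlP[hy1 hy2].
- by rewrite ler0_norm; nra.
- by rewrite ger0_norm; nra.
Qed.

Lemma objP_set_coord_lt m n (A : 'M[R]_(m.+1, n)) lam (x : 'I_n -> R) j v :
  (forall l, `|A l j| < lam) -> 0 < `|v - x j| -> `|v| - `|x j| = `|v - x j| ->
  objP A lam (set_coord x j v) < objP A lam x.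
Proof.
move=> hA d_gt0 hv; rewrite /objP norm1_set_coord hv.
suff : maxrow A (set_coord x j v) < maxrow A x + lam * `|v - x j| by lra.
apply: maxrow_lt => l; rewrite rowdot_set_coord.
have : A l j * (v - x j) < lam * `|v - x j|.
  apply: le_lt_trans (ler_norm _) _; rewrite normrM ltr_pM2r //; exact: hA.
by have := rowdot_le_maxrow A l x; lra.
Qed.

Lemma push_outward (y eps : R) : `|y| < 1 -> 0 < eps ->
  exists v, [/\ -1 <= v <= 1, 0 < `|v - y| <= eps & `|v| - `|y| = `|v - y|].
Proof.
move=> hy heps; pose t := Num.min eps (1 - `|y|).
have t_gt0 : 0 < t by rewrite lt_min heps subr_gt0.
have t_le_eps : t <= eps by rewrite ge_min lexx.
have t_le : t <= 1 - `|y| by rewrite ge_min lexx orbT.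
have [y_ge0|y_lt0] := lerP 0 y.
- exists (y + t); rewrite addrAC subrr add0r gtr0_norm //.
  rewrite (ger0_norm y_ge0) in t_le *; rewrite ger0_norm; last lra.
  by split; rewrite ?t_gt0 ?t_le_eps //; [apply/andP; split|]; lra.
- exists (y - t); rewrite addrAC subrr add0r normrN gtr0_norm //.
  rewrite (ltr0_norm y_lt0) in t_le *; rewrite ltr0_norm; last lra.
  by split; rewrite ?t_gt0 ?t_le_eps //; [apply/andP; split|]; lra.
Qed.

Section Bounded.
Variables (m n : nat) (A : 'M[R]_(m.+1, n)) (lam : R).
Hypothesis hlam : forall l, rownorm_inf A l < lam.

Lemma abs_entry_lt l j : `|A l j| < lam.
Proof. exact: le_lt_trans (abs_entry_le_rownorm A l j) (hlam l). Qed.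

Lemma local_minimizer_sign_vector xb : local_minimizer A lam xb -> is_sign_vector xb.
Proof.
move=> [hbox [eps [eps_gt0 hloc]]] j.
have /andP[lo hi] := hbox j.
case: (eqVneq (xb j) (-1)) => [|h1]; first by left.
case: (eqVneq (xb j) 1) => [|h2]; first by right.
have inner : `|xb j| < 1.
  by rewrite ltr_norml !lt_def h1 eq_sym h2 lo hi.
have [v [hv /andP[d_gt0 d_le] hout]] := push_outward (xb j) eps inner eps_gt0.
have := hloc (set_coord xb j v) (in_box_set_coord j v hbox hv).
rewrite norm2_set_coord_sub => /(_ d_le).
by rewrite leNgt objP_set_coord_lt // => l; exact: abs_entry_lt.
Qed.

Lemma sign_vector_local_minimizer xb : is_sign_vector xb -> local_minimizer A lam xb.
Proof.
move=> hs; split=> [j|]; first by case: (hs j) => ->; lra.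
exists 1; split=> [|x hx hd]; first exact: ltr01.
apply: objP_le_rowwise => l; rewrite !rowdot_sub_norm1.
apply: ler_sum => k _; apply: sign_term_le => //.
- exact: ltW (abs_entry_lt l k).
- exact: le_trans (coord_le_norm2 (fun k => x k - xb k) k) hd.
Qed.

End Bounded.
End Problem.

Theorem theorem4 (R : realType) (m n : nat) (A : 'M[R]_(m.+1, n)) (lam : R)
  (hlam : forall l : 'I_m.+1, rownorm_inf A l < lam) :
  (forall xb : 'I_n -> R, local_minimizer A lam xb -> is_sign_vector xb) /\
  (forall xb : 'I_n -> R, is_sign_vector xb -> local_minimizer A lam xb).
Proof.
split=> xb.
- exact: local_minimizer_sign_vector.
- exact: sign_vector_local_minimizer.
Qed.
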